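(* Let $\mathcal{F}$ be a free filter on $\omega$ and let $\kappa$ be a cardinal with $\omega\le\kappa\le\mathfrak{c}$. Then $C_p(X_{\mathcal{F},\kappa})$ is homeomorphic to $(C_\mathcal{F})^\kappa$ (with the product topology).
   Context: A filter on $\omega$ is free if it contains all cofinite sets. $\mathfrak{c}=2^{\aleph_0}$. $X_{\mathcal{F},\kappa}$ is the space $(\kappa\times\omega)\cup\{\infty\}$ in which every point of $\kappa\times\omega$ is isolated and the neighborhoods of $\infty$ are the sets $\{\infty\}\cup\bigcup\{\{\alpha\}\times A_\alpha:\alpha<\kappa\}$ with $A_\alpha\in\mathcal{F}$ for all $\alpha$. $C_p(X)$ is the space of continuous real-valued functions on $X$ with the pointwise convergence topology. $C_\mathcal{F}=\{f\in(-1,1)^\omega:\forall m\in\omega\ \{n\in\omega:|f(n)|<2^{-m}\}\in\mathcal{F}\}$, a subspace of $[-1,1]^\omega$ with the product topology. *)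

From HB Require Import structures.
From mathcomp Require Import all_boot all_order all_algebra.
From mathcomp Require Import all_classical all_reals all_analysis.
Set Implicit Arguments. Unset Strict Implicit. Unset Printing Implicit Defensive.
Import Order.TTheory GRing.Theory Num.Theory.
Import numFieldTopology.Exports.
Local Open Scope classical_set_scope.
Local Open Scope ring_scope.

(* The underlying set of X_{F,kappa}: (kappa x omega) u {oo}; None plays oo. *)
Definition Xpt (K : Type) := option (K * nat).

(* Open sets of X_{F,kappa}: points of kappa x omega are isolated, and the
   neighbourhoods of oo are {oo} u U_a {a} x A_a with A_a in F. *)
Definition X_open (F : set_system nat) (K : Type) (U : set (Xpt K)) : Prop :=
  U None -> forall a : K, F [set n | U (Some (a, n))].

Definition X_continuous (R : realType) (F : set_system nat) (K : Type)
  (f : Xpt K -> R) : Prop :=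
  forall V : set R, open V -> X_open F (f @^-1` V).

Definition Cp_X (R : realType) (F : set_system nat) (K : Type)
  : set {ptws Xpt K -> R} := [set f | X_continuous F f].

(* C_F as a subset of R^omega (product topology; same subspace topology as in
   [-1,1]^omega). *)
Definition C_F (R : realType) (F : set_system nat) : set {ptws nat -> R} :=
  [set f | (forall n, -1 < f n < 1) /\
           forall m : nat, F [set n | `|f n| < 2%:R ^- m]].

Definition C_F_pow (R : realType) (F : set_system nat) (K : Type)
  : set {ptws K -> {ptws nat -> R}} := [set g | forall a, C_F F (g a)].

Definition homeomorphic_subspaces (T1 T2 : topologicalType)
  (A : set T1) (B : set T2) : Prop :=
  exists (f : T1 -> T2) (g : T2 -> T1),
    (forall x, A x -> B (f x)) /\ (forall y, B y -> A (g y)) /\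
    (forall x, A x -> g (f x) = x) /\ (forall y, B y -> f (g y) = y) /\
    {within A, continuous f} /\ {within B, continuous g}.

(* The points (a, n) of X are isolated and accumulate only at oo, along F in
   each row.  So f |-> (a, n) |-> f (a, n) - f oo sends continuous functions to
   rows that tend to 0 along F, and applying the homeomorphism
   x |-> x / (1 + |x|) of R onto (-1, 1), which shrinks absolute values and
   whose inverse at most doubles them near 0, turns these rows into elements of
   C_F.  The coordinates (a, 0) are ignored by the free filter F, so they can
   carry the remaining kappa + 1 free reals f oo and f (b, 0): Hilbert's hotel
   along an injection e : omega -> kappa stores f oo at (e 0, 0) and
   f (b, 0) - f oo at (shift b, 0). *)

From mathcomp Require Import all_boot all_order all_algebra.
From mathcomp Require Import all_classical all_reals all_analysis.
From mathcomp Require Import ring lra.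
Import Order.TTheory GRing.Theory Num.Theory.
Import numFieldTopology.Exports numFieldNormedType.Exports.
Local Open Scope classical_set_scope.
Local Open Scope ring_scope.
Set Implicit Arguments.
Unset Strict Implicit.

Section pointwise_topology.
Context {I : Type} {T : topologicalType}.

Lemma ptws_cvgP (G : set_system {ptws I -> T}) (g : {ptws I -> T}) :
  Filter G -> G --> g <-> forall i, (fun f : {ptws I -> T} => f i) @ G --> g i.
Proof.
move=> G_filter; rewrite /prod_topology cvg_sup; split=> Gg i.
  apply: cvg_trans (cvg_app _ (Gg i)) _; exact: initial_continuous.
move=> A; rewrite (@nbhsE (initial_topology (fun f : {ptws I -> T} => f i))).
move=> [B [[C oC <-] Cgi] BA]; apply: filterS BA _.
by apply: (Gg i); apply: open_nbhs_nbhs.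
Qed.

Lemma ptws_proj_continuous (i : I) :
  continuous (fun f : {ptws I -> T} => f i).
Proof. move=> f; apply: (@ptws_cvgP (nbhs f) f _).1; exact: cvg_id. Qed.

Lemma continuous_into_ptws {S : topologicalType} (g : S -> {ptws I -> T}) x :
  (forall i, {for x, continuous (fun y => g y i)}) -> {for x, continuous g}.
Proof. by move=> gi; apply/ptws_cvgP. Qed.

End pointwise_topology.

Section squash.
Context {R : realType}.

Definition squash (x : R) : R := x / (1 + `|x|).
Definition unsquash (y : R) : R := y / (1 - `|y|).

Lemma normr_squash x : `|squash x| = `|x| / (1 + `|x|).
Proof. by rewrite normrM normfV (@ger0_norm _ (1 + _)) // addr_ge0. Qed.

Lemma normr_squash_lt1 x : `|squash x| < 1.
Proof. by rewrite normr_squash ltr_pdivrMr ?mul1r ?ltrDr // ltr_pwDl. Qed.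

Lemma normr_squash_le x : `|squash x| <= `|x|.
Proof.
rewrite normr_squash ler_pdivrMr ?ltr_pwDl //.
by rewrite ler_peMr ?lerDl.
Qed.

Lemma normr_unsquash y : `|y| < 1 -> `|unsquash y| = `|y| / (1 - `|y|).
Proof.
by move=> y1; rewrite normrM normfV (@ger0_norm _ (1 - _)) // subr_ge0 ltW.
Qed.

Lemma squashK : cancel squash unsquash.
Proof.
move=> x; rewrite /unsquash normr_squash /squash.
have x0 : 1 + `|x| != 0 by rewrite gt_eqF // ltr_pwDl.
have -> : 1 - `|x| / (1 + `|x|) = (1 + `|x|)^-1 by field.
by field.
Qed.

Lemma unsquashK y : `|y| < 1 -> squash (unsquash y) = y.
Proof.
move=> y1; rewrite /squash normr_unsquash // /unsquash.
have y0 : 1 - `|y| != 0 by rewrite gt_eqF // subr_gt0.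
have -> : 1 + `|y| / (1 - `|y|) = (1 - `|y|)^-1 by field.
by field.
Qed.

Lemma normr_unsquash_le y : `|y| < 2^-1 -> `|unsquash y| <= 2 * `|y|.
Proof.
move=> y2; have y1 : `|y| < 1 by apply: lt_trans y2 _; rewrite invf_lt1 ?ltr1n.
rewrite normr_unsquash // ler_pdivrMr ?subr_gt0 //.
have := normr_ge0 y; nra.
Qed.

Lemma squash_continuous : continuous squash.
Proof.
move=> x; apply: (@continuousM R R id (fun x => (1 + `|x|)^-1)).
  exact: cvg_id.
apply: continuousV; first by rewrite gt_eqF // ltr_pwDl.
by apply: continuousD; [exact: cst_continuous | exact: norm_continuous].
Qed.

Lemma unsquash_continuous y : `|y| < 1 -> {for y, continuous unsquash}.
Proof.
move=> y1; apply: (@continuousM R R id (fun y => (1 - `|y|)^-1)).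
  exact: cvg_id.
apply: continuousV; first by rewrite gt_eqF // subr_gt0.
by apply: continuousB; [exact: cst_continuous | exact: norm_continuous].
Qed.

Lemma exists_expr2V_lt (r : R) : 0 < r -> exists m : nat, 2%:R ^- m < r.
Proof.
move=> r0; exists (Num.truncn r^-1).+1.
rewrite -[X in _ < X]invrK ltf_pV2 ?posrE ?exprn_gt0 ?invr_gt0 //.
apply: lt_trans (truncnS_gt _) _.
by rewrite -natrX ltr_nat ltn_expl.
Qed.

End squash.

Section hilbert_hotel.
Context {K : Type} (e : nat -> K).
Hypothesis e_inj : injective e.

Definition e_index (a : K) : option nat :=
  if pselect (exists i, e i = a) is left ex_i then Some (projT1 (cid ex_i))
  else None.

Lemma e_indexK : pcancel e e_index.
Proof.
move=> i; rewrite /e_index; case: pselect => [ex_i|]; last by case; exists i.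
by case: cid => j /= /e_inj ->.
Qed.

Lemma e_indexP a i : e_index a = Some i -> e i = a.
Proof. by rewrite /e_index; case: pselect => // ex_i [<-]; case: cid. Qed.

Definition shift (b : K) : K := if e_index b is Some i then e i.+1 else b.

Definition unshift (a : K) : option K :=
  match e_index a with
  | Some 0 => None
  | Some i.+1 => Some (e i)
  | None => Some a
  end.

Lemma unshift_e0 : unshift (e 0) = None.
Proof. by rewrite /unshift e_indexK. Qed.

Lemma shiftK : pcancel shift unshift.
Proof.
move=> b; rewrite /shift; case ib: (e_index b) => [i|].
  by rewrite /unshift e_indexK (e_indexP ib).
by rewrite /unshift ib.
Qed.

Lemma unshiftK : ocancel unshift shift.
Proof.
move=> a; rewrite /unshift; case ia: (e_index a) => [[|i]|] //=.
  by rewrite /shift e_indexK (e_indexP ia).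
by rewrite /shift ia.
Qed.

Lemma unshift_None a : unshift a = None -> a = e 0.
Proof.
rewrite /unshift; case ia: (e_index a) => [[|i]|] // _.
by rewrite (e_indexP ia).
Qed.

End hilbert_hotel.

Lemma C_F_normr_lt1 {R : realType} {F : set_system nat}
  (f : {ptws nat -> R}) n : C_F F f -> `|f n| < 1.
Proof. by move=> [/(_ n) + _]; rewrite ltr_norml. Qed.

Section encoding.
Context {R : realType} {F : set_system nat} {K : Type} (e : nat -> K).
Hypothesis e_inj : injective e.

Definition encode (f : {ptws Xpt K -> R}) : {ptws K -> {ptws nat -> R}} :=
  fun a n => squash (if n is 0 then
                       if unshift e a is Some b then f (Some (b, 0)) - f None
                       else f None
                     else f (Some (a, n)) - f None).

Definition decode (g : {ptws K -> {ptws nat -> R}}) : {ptws Xpt K -> R} :=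
  let base := unsquash (g (e 0) 0) in
  fun p => if p is Some (b, n) then
             unsquash (g (if n is 0 then shift e b else b) n) + base
           else base.

Lemma encodeK : cancel encode decode.
Proof.
move=> f; have base : unsquash (encode f (e 0) 0) = f None.
  by rewrite /encode unshift_e0 // squashK.
apply: functional_extensionality_dep => -[[b [|n]]|] /=; rewrite base //.
  by rewrite /encode shiftK // squashK subrK.
by rewrite /encode squashK subrK.
Qed.

Lemma decodeK g : C_F_pow F g -> encode (decode g) = g.
Proof.
move=> CFg; apply: functional_extensionality_dep => a.
have g1 n : `|g a n| < 1 by apply: C_F_normr_lt1.
apply: functional_extensionality_dep => -[|n]; rewrite /encode /=; last first.
  by rewrite addrK unsquashK.
case ua: (unshift e a) => [b|]; last by rewrite -(unshift_None ua) unsquashK.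
have := unshiftK e_inj a; rewrite ua /= => shift_b.
by rewrite addrK shift_b unsquashK.
Qed.

Lemma encode_continuous : continuous encode.
Proof.
move=> f; apply: continuous_into_ptws => a; apply: continuous_into_ptws => n.
apply: (@continuous_comp _ _ _ _ squash); last exact: squash_continuous.
have proj_cont p : {for f, continuous (fun y : {ptws Xpt K -> R} => y p)}.
  exact: ptws_proj_continuous.
case: n => [|n] /=; last by apply: continuousB.
by case: (unshift e a) => [b|] //; apply: continuousB.
Qed.

Lemma decode_continuous g : C_F_pow F g -> {for g, continuous decode}.
Proof.
move=> CFg; pose entry a n (y : {ptws K -> {ptws nat -> R}}) := y a n.
have entry_cont a n : {for g, continuous (entry a n)}.
  apply: (@continuous_comp _ _ _ (fun y : {ptws K -> {ptws nat -> R}} => y a)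
                                 (fun z : {ptws nat -> R} => z n));
  exact: ptws_proj_continuous.
have unsquash_entry_cont a n : {for g, continuous (unsquash \o entry a n)}.
  apply: continuous_comp (entry_cont a n) _.
  by apply: unsquash_continuous; apply: C_F_normr_lt1.
apply: continuous_into_ptws => -[[b n]|] /=; last exact: unsquash_entry_cont.
exact: continuousD (unsquash_entry_cont _ _) (unsquash_entry_cont _ _).
Qed.

Context (F_filter : Filter F).
Hypothesis F_neq0 : F [set n | n <> 0]%N.

Lemma C_F_pow_encode f : Cp_X F f -> C_F_pow F (encode f).
Proof.
move=> Cf a; split=> [n|m]; first by rewrite -ltr_norml normr_squash_lt1.
have r0 : 0 < 2%:R ^- m :> R by rewrite invr_gt0 exprn_gt0.
have /(_ (ballxx _ r0) a) f_near := Cf _ (ball_open (f None) (2%:R ^- m)).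
apply: filterS (filterI f_near F_neq0) => -[|n] /= [f_an _] //.
by apply: le_lt_trans (normr_squash_le _) _; rewrite distrC.
Qed.

Lemma Cp_X_decode g : C_F_pow F g -> Cp_X F (decode g).
Proof.
move=> CFg V oV Vg a.
have /nbhs_ballP [r /= r0 rV] : nbhs (decode g None) V by apply: open_nbhs_nbhs.
have r0' : 0 < Num.min (r / 2) 2^-1 by rewrite lt_min divr_gt0 //= invr_gt0.
have [m] := exists_expr2V_lt r0'; rewrite lt_min => /andP [m_r m_half].
apply: filterS (filterI ((CFg a).2 m) F_neq0) => -[|n] /= [g_small _] //.
apply: rV; rewrite /ball /= opprD addrCA subrr addr0 normrN.
have := normr_unsquash_le (lt_trans g_small m_half).
by have := lt_trans g_small m_r; lra.
Qed.

End encoding.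

Unset Implicit Arguments.

Theorem mainTheorem16 (R : realType) (F : set_system nat) (K : Type)
  (PF : ProperFilter F)
  (free : forall A : set nat, finite_set (~` A) -> F A)
  (kappa_ge_omega : exists e : nat -> K, injective e)
  (kappa_le_c : exists e : K -> (nat -> bool), injective e) :
  homeomorphic_subspaces (@Cp_X R F K) (@C_F_pow R F K).
Proof.
(* The encoding needs only kappa >= omega. *)
have [e e_inj] := kappa_ge_omega.
have F_neq0 : F [set n | n <> 0]%N.
  by apply: free; rewrite -[X in ~` X]/(~` [set 0%N]) setCK; exact: finite_set1.
exists (encode e), (decode e).
split; first by move=> f; apply: C_F_pow_encode.
split; first by move=> g; apply: Cp_X_decode.
split; first by move=> f _; apply: encodeK.
split; first exact: decodeK.
split; first exact/continuous_subspaceT/encode_continuous.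
by apply: continuous_in_subspaceT => g /set_mem; apply: decode_continuous.
Qed.
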